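(* Let $G=(V,E)$ be an $n$-node graph, $\mathcal{C}$ a clustering of $G$ produced by $\mathbf{cluster}(G,e)$ for some integer $e\ge 1$, and $d,m$ positive integers. Let $H$ be the subgraph of $G$ on vertex set $V$ containing exactly the edges of $\mathbf{multspan}(G)$ and the edges of the paths in $\mathcal{S} = \mathbf{createStrips}(G, \mathcal{C}, d, m)$. Let $u,v\in V$ be such that $\rho_G(u,v)$ intersects exactly $k$ clean clusters and fewer than $\frac{k}{2}$ strips. Then $\delta_G(u,v) \ge \Omega\!\left(\frac{kd}{m}\right)$.
   Context: $G$ is unweighted and undirected; $\delta_G$ is shortest-path distance; the constant in $\Omega(\cdot)$ is absolute. For each pair of nodes $u,v$ a shortest path $\rho_G(u,v)$ is fixed, the choice being consistent and such that any two chosen shortest paths intersect on at most one (contiguous) subpath. $\mathbf{multspan}(G)$ is the subgraph produced by the greedy multiplicative spanner algorithm of Althöfer et al. with parameter $\log n$ ($O(n)$ edges, multiplicative stretch $2\log n -1$). The procedure $\mathbf{cluster}(G,e)$: initialize $\mathcal{C} = \emptyset$, unmark all nodes; while there is an unmarked node $u$ with at least $e-1$ unmarked neighbors, let $C$ be $u$ together with any $e-1$ of its unmarked neighbors, mark all nodes of $C$, add $C$ to $\mathcal{C}$; return $\mathcal{C}$. Elements of $\mathcal{C}$ are clusters. The procedure $\mathbf{createStrips}(G,\mathcal{C},d,m)$: initialize $\mathcal{S}=\emptyset$; while there exist $u,v \in V$ such that (1) $\delta_G(u,v) \le d$, (2) $\rho_G(u,v)$ intersects (shares a node with) at most $m$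 different paths in $\mathcal{S}$, and (3) $\rho_G(u,v)$ intersects exactly $m$ clusters that share no node with any path in $\mathcal{S}$, add $\rho_G(u,v)$ to $\mathcal{S}$; return $\mathcal{S}$. The paths in $\mathcal{S}$ are strips. A cluster is clean if it shares no node with any strip. A path intersects a strip or cluster if they share a node. *)

(* Graphs: a finite simple graph is a symmetric irreflexive
   relation [adj : rel V] on a finType V (n = #|V| nodes).  Paths are
   vertex sequences [seq V] (first vertex included). *)
From mathcomp Require Import all_boot.
Set Implicit Arguments. Unset Strict Implicit. Unset Printing Implicit Defensive.

Section Graph.
Variables (V : finType) (adj : rel V).

Definition walk_of_len (u v : V) (n : nat) : bool :=
  [exists t : n.-tuple V, path adj u t && (last u t == v)].

(* shortest-path distance delta_G(u,v): least n < #|V| with such a walk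
   (a shortest path has < #|V| edges); #|V| if v is unreachable *)
Definition dist (u v : V) : nat := find (walk_of_len u v) (iota 0 #|V|).

Definition rho_shortest (rho : V -> V -> seq V) : Prop :=
  forall u v, exists p, [/\ rho u v = u :: p, path adj u p, last u p = v
                          & size p = dist u v].

Definition rho_consistent (rho : V -> V -> seq V) : Prop :=
  forall u v (x0 : V) i j, i <= j -> j < size (rho u v) ->
    rho (nth x0 (rho u v) i) (nth x0 (rho u v) j)
    = take (j - i).+1 (drop i (rho u v)).

Definition contiguous_in (p q : seq V) : Prop :=
  forall (x0 : V) i l j, i <= l -> l <= j -> j < size p ->
    nth x0 p i \in q -> nth x0 p j \in q -> nth x0 p l \in q.

Definition rho_intersect_ok (rho : V -> V -> seq V) : Prop :=
  forall u v x y, contiguous_in (rho u v) (rho x y).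

Definition meets_set (p : seq V) (c : {set V}) : bool := has (fun x => x \in c) p.
Definition meets_path (p q : seq V) : bool := has (fun x => x \in q) p.

(* ---- cluster(G,e): outputs of the nondeterministic procedure ----
   cluster_from marked Cs : starting with set [marked] of marked nodes, the
   loop can produce the list of clusters Cs (in order) and then stop. *)
Inductive cluster_from (e : nat) : {set V} -> seq {set V} -> Prop :=
| cl_stop (marked : {set V}) :
    (forall u, u \notin marked ->
       #|[set w | adj u w & w \notin marked]| < e.-1) ->
    cluster_from e marked [::]
| cl_step (marked : {set V}) (u : V) (N : {set V}) rest :
    u \notin marked ->
    N \subset [set w | adj u w & w \notin marked] ->
    #|N| = e.-1 ->
    cluster_from e (marked :|: (u |: N)) rest ->
    cluster_from e marked ((u |: N) :: rest).

Definition is_cluster_output (e : nat) (C : seq {set V}) : Prop :=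
  cluster_from e set0 C.

Definition clean (S : seq (seq V)) (c : {set V}) : bool :=
  ~~ has (fun s => meets_set s c) S.

Definition nb_strips_meeting (S : seq (seq V)) (p : seq V) : nat :=
  size (undup [seq s <- S | meets_path p s]).

Definition nb_clean_meeting (C : seq {set V}) (S : seq (seq V)) (p : seq V) : nat :=
  size (undup [seq c <- C | clean S c && meets_set p c]).

Definition strip_eligible (rho : V -> V -> seq V) (C : seq {set V}) (d m : nat)
    (S : seq (seq V)) (u v : V) : Prop :=
  [/\ dist u v <= d,
      nb_strips_meeting S (rho u v) <= m
    & nb_clean_meeting C S (rho u v) = m].

Inductive strips_from (rho : V -> V -> seq V) (C : seq {set V}) (d m : nat)
  : seq (seq V) -> seq (seq V) -> Prop :=
| st_stop S : (forall u v, ~ strip_eligible rho C d m S u v) ->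
    strips_from rho C d m S S
| st_step S u v S' : strip_eligible rho C d m S u v ->
    strips_from rho C d m (rcons S (rho u v)) S' ->
    strips_from rho C d m S S'.

Definition is_strips_output (rho : V -> V -> seq V) (C : seq {set V}) (d m : nat)
  (S : seq (seq V)) : Prop := strips_from rho C d m [::] S.

End Graph.

(** Walk along [q := rho u v] and cut off the shortest prefix [p]
    meeting [m] clean clusters; since clusters are disjoint, such a prefix
    exists and ends in a vertex [x] of a clean cluster.  As chosen shortest
    paths intersect contiguously, a strip meeting both [p] and the rest of [q]
    would pass through [x], so the strips met by [q] split between the two
    parts.  If [p] meets at most [m] strips, the termination of
    [createStrips] forbids [delta(p) <= d], so [p] has more than [d] edges;
    otherwise [p] pays for its [m] clusters with more than [m] strips.
    Iterating gives [(d+1) k <= m |q| + (d+1) (#strips + m)], and fewer than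
    [k/2] strips together with [k >= 4m] yields [k d <= 4 m delta(u,v)]. *)
From mathcomp Require Import all_boot zify.
Set Implicit Arguments. Unset Strict Implicit. Unset Printing Implicit Defensive.

Lemma cluster_from_fresh_disjoint (V : finType) (adj : rel V) e marked Cs :
  cluster_from adj e marked Cs ->
  (forall c x, c \in Cs -> x \in c -> x \notin marked) /\
  (forall c1 c2 x, c1 \in Cs -> c2 \in Cs -> x \in c1 -> x \in c2 -> c1 = c2).
Proof.
elim=> {marked Cs} [//|marked u N rest u_fresh sub_N _ _ [fresh_rest disj_rest]].
have fresh_uN x : x \in u |: N -> x \notin marked.
  rewrite in_setU1 => /predU1P[-> //|xN].
  by move/subsetP: sub_N => /(_ x xN); rewrite inE => /andP[].
split=> [c x|c1 c2 x].
  rewrite inE => /predU1P[->|c_rest] xc; first exact: fresh_uN.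
  by have := fresh_rest c x c_rest xc; rewrite inE negb_or => /andP[].
rewrite !inE => /predU1P[->|c1_rest] /predU1P[->|c2_rest] x1 x2 //.
- by have := fresh_rest c2 x c2_rest x2; rewrite inE x1 orbT.
- by have := fresh_rest c1 x c1_rest x1; rewrite inE x2 orbT.
- exact: disj_rest x1 x2.
Qed.

Lemma cluster_output_disjoint (V : finType) (adj : rel V) e C c1 c2 x :
  is_cluster_output adj e C -> c1 \in C -> c2 \in C -> x \in c1 -> x \in c2 ->
  c1 = c2.
Proof. by move=> /cluster_from_fresh_disjoint[_]; apply. Qed.

Section Strips.
Variables (V : finType) (adj : rel V) (rho : V -> V -> seq V).
Variables (C : seq {set V}) (d m : nat).

Lemma strips_from_chosen S0 S :
  strips_from adj rho C d m S0 S ->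
  (forall s, s \in S0 -> exists x y, s = rho x y) ->
  forall s, s \in S -> exists x y, s = rho x y.
Proof.
elim=> {S0 S} [//|S0 u v S _ _ IH] chosen0; apply: IH => s.
by rewrite mem_rcons inE => /predU1P[->|/chosen0//]; exists u, v.
Qed.

Lemma strips_from_maximal S0 S x y :
  strips_from adj rho C d m S0 S -> ~ strip_eligible adj rho C d m S x y.
Proof. by elim. Qed.

End Strips.

Lemma uniq_disjoint_count_mem (V : finType) (s : seq {set V}) (x : V) :
  uniq s -> {in s &, forall a b : {set V}, x \in a -> x \in b -> a = b} ->
  count [pred c : {set V} | x \in c] s <= 1.
Proof.
move=> s_uniq disj; rewrite -size_filter.
case def_t: (filter _ s) => [//|a t].
have: {subset a :: t <= [:: a]}.
  move=> b; rewrite -def_t !mem_filter /= => /andP[xb bs].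
  have: a \in filter [pred c : {set V} | x \in c] s by rewrite def_t mem_head.
  by rewrite mem_filter => /andP[xa as']; rewrite inE (disj b a).
by move/(uniq_leq_size _); rewrite -def_t filter_uniq //; apply.
Qed.

Section Counting.
Variables (V : finType) (C : seq {set V}) (S : seq (seq V)).

Lemma nb_clean_meetingE q :
  nb_clean_meeting C S q = count (fun c => clean S c && meets_set q c) (undup C).
Proof. by rewrite /nb_clean_meeting -filter_undup size_filter. Qed.

Lemma nb_strips_meetingE q :
  nb_strips_meeting S q = count (meets_path q) (undup S).
Proof. by rewrite /nb_strips_meeting -filter_undup size_filter. Qed.

Lemma nb_clean_meeting0 : nb_clean_meeting C S [::] = 0.
Proof.
by rewrite nb_clean_meetingE; apply/eqP; rewrite -leqn0 -(count_pred0 (undup C))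
  sub_count // => c; rewrite andbF.
Qed.

Lemma nb_clean_meeting_cat q1 q2 :
  nb_clean_meeting C S (q1 ++ q2) <=
  nb_clean_meeting C S q1 + nb_clean_meeting C S q2.
Proof.
rewrite !nb_clean_meetingE -count_predUI; apply: leq_trans (leq_addr _ _).
by apply: sub_count => c; rewrite /= /meets_set has_cat andb_orr.
Qed.

Lemma nb_clean_meeting_rcons q x :
  {in C &, forall a b : {set V}, x \in a -> x \in b -> a = b} ->
  nb_clean_meeting C S (rcons q x) <= nb_clean_meeting C S q + 1.
Proof.
move=> disj; rewrite !nb_clean_meetingE.
set meets_q := fun c => clean S c && meets_set q c.
apply: (@leq_trans (count (predU meets_q [pred c : {set V} | x \in c]) (undup C))).
  by apply: sub_count => c; rewrite /= /meets_q /meets_set has_rcons;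
    case: (clean S c); rewrite //= orbC.
set has_x := [pred c : {set V} | x \in c].
apply: leq_trans (leq_addr (count (predI meets_q has_x) (undup C)) _) _.
rewrite count_predUI leq_add2l.
apply: uniq_disjoint_count_mem (undup_uniq C) _ => a b.
by rewrite !mem_undup; apply: disj.
Qed.

Lemma nb_clean_meeting_rcons_dirty q x :
  ~~ has (fun c => clean S c && (x \in c)) C ->
  nb_clean_meeting C S (rcons q x) = nb_clean_meeting C S q.
Proof.
move=> /hasPn dirty; rewrite !nb_clean_meetingE; apply: eq_in_count => c.
rewrite mem_undup /meets_set has_rcons => /dirty.
by case: (clean S c) (x \in c) => -[].
Qed.

Lemma nb_strips_meeting_cat q1 q2 :
  {in S, forall s, ~~ (meets_path q1 s && meets_path q2 s)} ->
  nb_strips_meeting S (q1 ++ q2) = nb_strips_meeting S q1 + nb_strips_meeting S q2.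
Proof.
move=> split_S; rewrite !nb_strips_meetingE -count_predUI.
have -> : count (predI (meets_path q1) (meets_path q2)) (undup S) = 0.
  apply/eqP; rewrite -leqn0 leqNgt -has_count; apply/hasPn => s.
  by rewrite mem_undup => /split_S.
by rewrite addn0; apply: eq_count => s; rewrite /meets_path has_cat.
Qed.

End Counting.

Section ChosenSegments.
Variables (V : finType) (rho : V -> V -> seq V).

Definition chosen_segments (q : seq V) : Prop :=
  forall i j, i < j <= size q -> exists x y, rho x y = take (j - i) (drop i q).

Lemma consistent_chosen_segments u v :
  rho_consistent rho -> chosen_segments (rho u v).
Proof.
move=> rho_cons i j /andP[lt_ij le_j].
exists (nth u (rho u v) i), (nth u (rho u v) j.-1).
by rewrite rho_cons; [congr (take _ _) | |]; lia.
Qed.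

Lemma chosen_segments_drop n q : chosen_segments q -> chosen_segments (drop n q).
Proof.
move=> segs i j; rewrite size_drop => ij.
have [x [y E]] := segs (i + n) (j + n) ltac:(lia).
by exists x, y; rewrite E drop_drop subnDr.
Qed.

Lemma chosen_segments_prefix n q :
  chosen_segments q -> 0 < n <= size q -> exists x y, rho x y = take n q.
Proof. by move=> segs /segs[x [y E]]; exists x, y; rewrite E subn0 drop0. Qed.

End ChosenSegments.

Section CleanClusterBound.
Variables (V : finType) (adj : rel V) (rho : V -> V -> seq V).
Variables (C : seq {set V}) (S : seq (seq V)) (d m : nat).
Hypothesis rho_sh : rho_shortest adj rho.
Hypothesis rho_int : rho_intersect_ok rho.
Hypothesis C_disj :
  forall c1 c2 x, c1 \in C -> c2 \in C -> x \in c1 -> x \in c2 -> c1 = c2.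
Hypothesis S_chosen : forall s, s \in S -> exists x y, s = rho x y.
Hypothesis S_maximal : forall x y, ~ strip_eligible adj rho C d m S x y.

Local Notation nclean := (nb_clean_meeting C S).
Local Notation nstrips := (nb_strips_meeting S).

Lemma saturated_chosen_path_long x y :
  nstrips (rho x y) <= m -> nclean (rho x y) = m -> d.+2 <= size (rho x y).
Proof.
move=> few_strips sat; have [p [E _ _ size_p]] := rho_sh x y.
rewrite E /= size_p ltnS ltnNge; apply/negP => close.
exact: S_maximal (And3 close few_strips sat).
Qed.

Lemma strip_avoids_split q1 x q2 :
  chosen_segments rho (rcons q1 x ++ q2) -> has (fun c => clean S c && (x \in c)) C ->
  {in S, forall s, ~~ (meets_path (rcons q1 x) s && meets_path q2 s)}.
Proof.
set p := rcons q1 x; set q := p ++ q2 => segs /hasP[c cC /andP[c_clean xc]] s sS.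
apply/negP => /andP[/(has_nthP x)[i lt_i si] /(has_nthP x)[j lt_j sj]].
have size_p : size p = (size q1).+1 by rewrite size_rcons.
have size_q : size q = size p + size q2 by rewrite /q size_cat.
have [a [b q_rho]] := chosen_segments_prefix (n := size q) segs ltac:(lia).
have [a' [b' s_rho]] := S_chosen sS.
have cont : contiguous_in q s by rewrite -(take_size q) -q_rho s_rho; apply: rho_int.
have nth_p k : k < size p -> nth x q k = nth x p k.
  by move=> lt_k; rewrite /q nth_cat lt_k.
have nth_q2 k : nth x q (size p + k) = nth x q2 k.
  by rewrite /q nth_cat ltnNge leq_addr addKn.
have xs : x \in s.
  have <- : nth x p (size q1) = x by rewrite nth_rcons ltnn eqxx.
  rewrite -nth_p ?size_p //; apply: (cont x i _ (size p + j));
    rewrite ?nth_q2 ?nth_p //; lia.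
by move/hasPn: c_clean => /(_ s sS) /hasPn /(_ x xs); rewrite xc.
Qed.

Hypothesis m_gt0 : 0 < m.

Lemma saturating_prefix q :
  m <= nclean q -> exists q1 x q2, [/\ q = rcons q1 x ++ q2,
    nclean (rcons q1 x) = m & has (fun c => clean S c && (x \in c)) C].
Proof.
elim/last_ind: q => [|q y IH]; first by rewrite nb_clean_meeting0 leqNgt m_gt0.
have [/IH[q1 [x [q2 [-> sat x_clean]]]] _ | lt_m ge_m] := leqP m (nclean q).
  by exists q1, x, (rcons q2 y); rewrite rcons_cat.
have sat : nclean (rcons q y) = m.
  have : nclean (rcons q y) <= nclean q + 1.
    by apply: nb_clean_meeting_rcons => a b aC bC; apply: C_disj.
  lia.
exists q, y, [::]; rewrite cats0; split=> //.
apply/negPn/negP => /nb_clean_meeting_rcons_dirty dirty.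
by move: lt_m; rewrite -dirty sat ltnn.
Qed.

Lemma clean_count_bound q :
  chosen_segments rho q -> d.+1 * nclean q <= m * size q + d.+1 * (nstrips q + m).
Proof.
have [n] := ubnP (size q); elim: n q => // n IH q /ltnSE le_q segs.
have [lt_m | /saturating_prefix[q1 [x [q2 [def_q sat x_clean]]]]] := ltnP (nclean q) m.
  by nia.
set p := rcons q1 x in def_q sat.
have strips_q : nstrips q = nstrips p + nstrips q2.
  rewrite def_q nb_strips_meeting_cat //.
  by apply: strip_avoids_split; move: segs; rewrite def_q.
have clean_q : nclean q <= m + nclean q2.
  by rewrite def_q -sat nb_clean_meeting_cat.
have size_q : size q = size p + size q2 by rewrite def_q size_cat.
have size_p : 0 < size p by rewrite size_rcons.
have IHq2 : d.+1 * nclean q2 <= m * size q2 + d.+1 * (nstrips q2 + m).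
  apply: IH; first lia.
  by have := chosen_segments_drop (n := size p) segs; rewrite def_q drop_size_cat.
have [few_strips | many_strips] := leqP (nstrips p) m; last by nia.
have [a [b p_rho]] := chosen_segments_prefix (n := size p) segs ltac:(lia).
have p_long : d.+2 <= size p.
  rewrite def_q take_size_cat // in p_rho.
  by rewrite -p_rho saturated_chosen_path_long ?p_rho.
by nia.
Qed.

End CleanClusterBound.

Theorem lemma3 :
  exists c N : nat, 0 < c /\
  forall (V : finType) (adj : rel V),
    symmetric adj -> irreflexive adj ->
  forall rho : V -> V -> seq V,
    rho_shortest adj rho -> rho_consistent rho -> rho_intersect_ok rho ->
  forall (e : nat) (C : seq {set V}), 0 < e -> is_cluster_output adj e C ->
  forall (d m : nat), 0 < d -> 0 < m ->
  forall S : seq (seq V), is_strips_output adj rho C d m S ->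
  forall (u v : V) (k : nat),
    nb_clean_meeting C S (rho u v) = k ->
    2 * nb_strips_meeting S (rho u v) < k ->
    N * m <= k ->
    k * d <= c * m * dist adj u v.
Proof.
exists 4, 4; split=> // V adj _ _ rho rho_sh rho_cons rho_int e C _ C_out d m _ m_gt0
  S S_out u v k def_k few_strips many_clean.
have C_disj := cluster_output_disjoint C_out.
have S_chosen : forall s, s \in S -> exists x y, s = rho x y.
  by apply: (strips_from_chosen S_out) => s.
have S_maximal x y : ~ strip_eligible adj rho C d m S x y := strips_from_maximal S_out.
have size_rho : size (rho u v) = (dist adj u v).+1.
  by have [p [-> _ _ <-]] := rho_sh u v.
have := clean_count_bound rho_sh rho_int C_disj S_chosen S_maximal m_gt0
  (consistent_chosen_segments (u := u) (v := v) rho_cons).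
rewrite size_rho def_k; nia.
Qed.
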